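(* Let $q,q',n$ be integers with $q'\ge 2q>3$ and $n>1$. Let $S$ be an $\mathcal{OS}_q(n)$ of period $m$ with ring sequence $[s_0,\ldots,s_{m-1}]$, and for $x\in\mathbb{Z}_q$ let $x'$ denote the class in $\mathbb{Z}_{q'}$ of the integer in $\{0,\ldots,q-1\}$ representing $x$. Let $T$ be the sequence over $\mathbb{Z}_{q'}$ with ring sequence $[t_0,\ldots,t_{m-1}]$, where $t_i=(-1)^{i+m-1}s_i'$ if $s_i'\neq 0$ and $t_i=(-1)^{i+m-1}q$ (as an element of $\mathbb{Z}_{q'}$) if $s_i'=0$. Then $T$ is an $\mathcal{SOS}_{q'}(n)$.
   Context: For a periodic sequence $S=(s_i)$ over $\mathbb{Z}_q$ write $\mathbf{s}_n(i)=(s_i,\ldots,s_{i+n-1})$; $\mathbf{u}^R$ denotes the reverse of a tuple and $-\mathbf{u}$ its termwise negative. An $n$-window sequence of period $m$ satisfies $\mathbf{s}_n(i)=\mathbf{s}_n(j)\Rightarrow i\equiv j\pmod m$. An $\mathcal{OS}_q(n)$ is an $n$-window sequence with $\mathbf{s}_n(i)\neq\mathbf{s}_n(j)^R$ for all $i,j$; an $\mathcal{SOS}_q(n)$ is an $\mathcal{OS}_q(n)$ with also $\mathbf{s}_n(i)\neq-\mathbf{s}_n(j)^R$ for all $i,j$. The ring sequence of a sequence of period $m$ is one period, i.e. $s_{i+tm}=s_i$. *)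

From HB Require Import structures.
From mathcomp Require Import all_boot all_algebra.
Set Implicit Arguments. Unset Strict Implicit. Unset Printing Implicit Defensive.
Import GRing.Theory.
Local Open Scope ring_scope.

Definition window (V : Type) (s : nat -> V) (n i : nat) : seq V :=
  [seq s (i + k)%N | k <- iota 0 n].

Definition periodic (V : Type) (s : nat -> V) (m : nat) : Prop :=
  (0 < m)%N /\ forall i, s (i + m)%N = s i.

Definition window_seq (V : eqType) (s : nat -> V) (n m : nat) : Prop :=
  periodic s m /\
  forall i j, window s n i = window s n j -> i = j %[mod m].

Definition OS (V : eqType) (s : nat -> V) (n m : nat) : Prop :=
  window_seq s n m /\ forall i j, window s n i <> rev (window s n j).

Definition SOS (V : zmodType) (s : nat -> V) (n m : nat) : Prop :=
  OS s n m /\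
  forall i j, window s n i <> map (fun x => - x) (rev (window s n j)).

Definition liftZ (q q' : nat) (x : 'Z_q) : 'Z_q' := (val x)%:R.

Definition Tseq (q q' : nat) (s : nat -> 'Z_q) (m : nat) (i : nat) : 'Z_q' :=
  let j := (i %% m)%N in
  let x := liftZ q' (s j) in
  (-1) ^+ (j + m - 1)%N * (if x != 0 then x else q%:R).

(* Reading an element v of Z_{q'} as its distance min(v, q' - v) to 0 and
   reducing modulo q gives a map Z_{q'} -> Z_q that is invariant under
   negation and inverts the letter-by-letter encoding s_i |-> t_i up to sign:
   the encoded letters lie in {1, ..., q}, and q' - q >= q.  Hence every
   window of T and every negated window of T decodes to the corresponding
   window of S, so a coincidence of windows of T (possibly reversed and
   negated) would give one for S, which S, being an OS_q(n), excludes. *)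
From mathcomp Require Import all_boot all_algebra.
From mathcomp Require Import zify.

Set Implicit Arguments.
Unset Strict Implicit.
Unset Printing Implicit Defensive.
Import GRing.Theory.
Local Open Scope ring_scope.

Lemma window_map (V W : Type) (f : V -> W) (t : nat -> V) n i :
  window (f \o t) n i = map f (window t n i).
Proof. by rewrite /window -map_comp. Qed.

Lemma periodic_mod (V : Type) (s : nat -> V) m :
  periodic s m -> forall i, s i = s (i %% m)%N.
Proof.
move=> [_ sP] i; rewrite {1}(divn_eq i m).
elim: (i %/ m)%N => [|k IHk]; first by rewrite mul0n add0n.
by rewrite mulSn -addnA addnC sP.
Qed.

Lemma ltn_Zp p (x : 'Z_p) : (1 < p)%N -> (x < p)%N.
Proof. by move=> p_gt1; rewrite -[p in (_ < p)%N]Zp_cast // ltn_ord. Qed.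

Lemma val_Zp_opp p (v : 'Z_p) : (1 < p)%N -> val (- v) = ((p - v) %% p)%N.
Proof.
move=> p_gt1; have -> : val (- v) = (((Zp_trunc p).+2 - v) %% (Zp_trunc p).+2)%N by [].
(* Generalize [v] so that rewriting the modulus leaves its type alone. *)
by move: (nat_of_ord v) => k; rewrite Zp_cast.
Qed.

Section DecodedWindows.

Variables (V : zmodType) (W : eqType) (f : V -> W) (t : nat -> V) (s : nat -> W).
Hypothesis f_opp : forall x, f (- x) = f x.
Hypothesis s_ft : forall i, s i = f (t i).

Lemma window_decode n i : window s n i = map f (window t n i).
Proof. by rewrite -window_map; apply: eq_map => k; rewrite s_ft. Qed.

Lemma SOS_of_OS_decode n m : periodic t m -> OS s n m -> SOS t n m.
Proof.
move=> tP [[_ sW] sR]; split; first split.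
- split=> // i j tij; apply: sW.
  by rewrite !window_decode tij.
- move=> i j tij; apply: (sR i j).
  by rewrite !window_decode tij map_rev.
move=> i j tij; apply: (sR i j).
by rewrite !window_decode tij -map_comp (eq_map f_opp) map_rev.
Qed.

End DecodedWindows.

Section Encoding.

Variables (q q' : nat).
Hypothesis q_gt1 : (1 < q)%N.
Hypothesis q'_ge : (2 * q <= q')%N.

Let q'_gt1 : (1 < q')%N. Proof. lia. Qed.

Definition encodeZ (x : 'Z_q) : 'Z_q' :=
  let y := liftZ q' x in if y != 0 then y else q%:R.

Definition decodeZ (v : 'Z_q') : 'Z_q := (minn v (q' - v))%:R.

Lemma decodeZN v : decodeZ (- v) = decodeZ v.
Proof.
have [->|v_neq0] := eqVneq v 0; first by rewrite oppr0.
have v_pos : (0 < v)%N by rewrite lt0n; apply: contra v_neq0 => /eqP v0; apply/eqP/val_inj.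
have v_lt := ltn_Zp v q'_gt1.
rewrite /decodeZ val_Zp_opp // modn_small; last lia.
by congr _%:R; lia.
Qed.

Lemma encodeZE (x : 'Z_q) :
  encodeZ x = (if nat_of_ord x == 0%N then q else x)%:R.
Proof.
have x_lt := ltn_Zp x q_gt1.
have liftE : nat_of_ord (liftZ q' x) = x by rewrite /liftZ /= val_Zp_nat // modn_small //; lia.
rewrite /encodeZ; have [x0|x_neq0] := eqVneq (nat_of_ord x) 0%N.
  have -> : liftZ q' x = 0 by apply: val_inj; rewrite /= liftE x0.
  by rewrite eqxx.
have -> // : liftZ q' x != 0.
by apply: contra x_neq0 => /eqP lift0; rewrite -liftE lift0.
Qed.

Lemma encodeZK : cancel encodeZ decodeZ.
Proof.
move=> x; rewrite encodeZE; set c := (if _ then _ else _).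
have x_lt := ltn_Zp x q_gt1.
have c_le : (c <= q)%N by rewrite /c; case: eqP => _; lia.
rewrite /decodeZ val_Zp_nat // modn_small; last lia.
have -> : minn c (q' - c) = c by apply/minn_idPl; lia.
rewrite /c; case: eqP => [x0|_]; last exact: natr_Zp.
by rewrite pchar_Zp //; apply: val_inj; rewrite /= x0.
Qed.

Lemma decodeZ_Tseq (s : nat -> 'Z_q) m :
  periodic s m -> forall i, s i = decodeZ (Tseq q' s m i).
Proof.
move=> sP i; rewrite (periodic_mod sP) /Tseq -signr_odd mulr_sign.
by case: ifP => _; rewrite ?decodeZN encodeZK.
Qed.

End Encoding.

Lemma periodic_Tseq (q q' : nat) (s : nat -> 'Z_q) m :
  (0 < m)%N -> periodic (Tseq q' s m) m.
Proof. by split=> // i; rewrite /Tseq modnDr. Qed.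

Theorem lemma3p12 (q q' n m : nat) (s : nat -> 'Z_q) :
  (2 * q <= q')%N -> (3 < 2 * q)%N -> (1 < n)%N ->
  OS s n m ->
  SOS (Tseq q' s m) n m.
Proof.
move=> q'_ge q_gt _ sOS.
have q_gt1 : (1 < q)%N by lia.
have [[[m_gt0 _] _] _] := sOS.
exact: (SOS_of_OS_decode (decodeZN q_gt1 q'_ge)
          (decodeZ_Tseq q_gt1 q'_ge sOS.1.1) (periodic_Tseq q' s m_gt0) sOS).
Qed.
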